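(* Let $G$ and $H$ be graphs with $|V(G)|\ge2$, and let $S\subseteq E(G\times H)$. Define the graph $G^*$ as follows: <ul> <li>its vertex set is the set of $H$-fibers $\{{}_xH: x\in V(G)\}$;</li> <li>two distinct fibers ${}_xH$ and ${}_yH$ are adjacent if and only if $G\times H-S$ contains at least one edge with one end in ${}_xH$ and the other end in ${}_yH$.</li> </ul> If $G^*$ is disconnected, then one of the following holds: <ol> <li>$|S|>2\kappa'(G)e(H)$;</li> <li>$|S|=2\kappa'(G)e(H)$ and $S$ is the set induced by some minimum edge cut of $G$.</li> </ol>
   Context: All graphs are finite, simple and undirected. $e(H)=|E(H)|$. The direct product $G\times H$ has vertex set $V(G)\times V(H)$. Two vertices $(x,u),(y,v)$ are adjacent if and only if $xy\in E(G)$ and $uv\in E(H)$. For $x\in V(G)$, the $H$-fiber is ${}_xH=\{(x,u):u\in V(H)\}$. For a graph $G$ with at least two vertices, an edge cut is the set $E(X,Y)$ of all edges joining $X$ and $Y$, for a partition $(X,Y)$ of $V(G)$ into nonempty parts. $\kappa'(G)$ is the minimum size of an edge cut, and a minimum edge cut is an edge cut of that size. For $S_0\subseteq E(G)$, the set induced by $S_0$ is $\{(x,u)(y,v),(x,v)(y,u): xy\in S_0,\ uv\in E(H)\}$. *)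

From mathcomp Require Import all_boot.
Set Implicit Arguments. Unset Strict Implicit. Unset Printing Implicit Defensive.

Definition simple_graph (T : finType) (e : rel T) : Prop :=
  symmetric e /\ irreflexive e.

Definition edges (T : finType) (e : rel T) : {set {set T}} :=
  [set f : {set T} | [exists x : T, exists y : T, e x y && (f == [set x; y])]].

Definition dprod_rel (T U : finType) (eG : rel T) (eH : rel U) : rel (T * U) :=
  fun p q => eG p.1 q.1 && eH p.2 q.2.

Definition edge_cut (T : finType) (e : rel T) (X : {set T}) : {set {set T}} :=
  [set f : {set T} | [exists x : T, exists y : T,
     [&& x \in X, y \notin X, e x y & f == [set x; y]]]].

Definition proper_part (T : finType) (X : {set T}) : bool :=
  (X != set0) && (X != setT).

(* kappa'(G): minimum size of an edge cut (cuts have size <= e(G), so the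
   seed #|edges e| is harmless whenever |V| >= 2) *)
Definition kappa' (T : finType) (e : rel T) : nat :=
  \big[minn/#|edges e|]_(X : {set T} | proper_part X) #|edge_cut e X|.

Definition min_edge_cut (T : finType) (e : rel T) (C : {set {set T}}) : Prop :=
  exists X : {set T}, proper_part X /\ C = edge_cut e X /\ #|C| = kappa' e.

Definition induced_set (T U : finType) (eH : rel U) (S0 : {set {set T}})
  : {set {set (T * U)}} :=
  [set f : {set (T * U)} | [exists x : T, exists y : T, exists u : U, exists v : U,
     [&& [set x; y] \in S0, eH u v &
        (f == [set (x, u); (y, v)]) || (f == [set (x, v); (y, u)])]]].

Definition star_rel (T U : finType) (eG : rel T) (eH : rel U)
  (S : {set {set (T * U)}}) : rel T :=
  fun x y => (x != y) && [exists u : U, exists v : U,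
     dprod_rel eG eH (x, u) (y, v) && ([set (x, u); (y, v)] \notin S)].

Definition graph_connected (T : finType) (e : rel T) : Prop :=
  forall x y : T, connect e x y.

From mathcomp Require Import all_boot all_order.
Import Order.TTheory.
Set Implicit Arguments. Unset Strict Implicit. Unset Printing Implicit Defensive.

(* Let X be the set of vertices whose fibers lie in one component of G^*.
   Every edge of G x H joining a fiber over X to a fiber outside X lies in S,
   so S contains the set induced by the edge cut E(X, V - X).  That set has
   exactly 2 |E(X, V - X)| e(H) >= 2 kappa'(G) e(H) elements, and equality in
   the count forces E(X, V - X) to be a minimum cut (when e(H) > 0) and S to
   be the induced set itself. *)

Lemma set2_eq (T : finType) (a b c d : T) :
  [set a; b] = [set c; d] -> (a = c /\ b = d) \/ (a = d /\ b = c).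
Proof.
move=> E.
have /set2P[ac|ad] : a \in [set c; d] by rewrite -E set21.
all: have /set2P[bc|bd] : b \in [set c; d] by rewrite -E set22.
all: have /set2P[ca|cb] : c \in [set a; b] by rewrite E set21.
all: have /set2P[da|db] : d \in [set a; b] by rewrite E set22.
all: first [by left; split; congruence | by right; split; congruence].
Qed.

Section EdgeCuts.

Variables (T : finType) (e : rel T).

Definition arcs : {set T * T} := [set q | e q.1 q.2].

Lemma card_arcs : simple_graph e -> #|arcs| = 2 * #|edges e|.
Proof.
(* Orient each edge by the enumeration rank of its ends: reversal swaps the
   increasing and decreasing arcs, and increasing arcs are in bijection with
   edges. *)
case=> esym eirr; pose r (u : T) := val (enum_rank u).
have neq_of_e u v : e u v -> r u != r v.
  by apply: contraTneq => /val_inj/enum_rank_inj ->; rewrite eirr.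
pose up := [set q | e q.1 q.2 & r q.1 < r q.2].
pose swap (q : T * T) := (q.2, q.1).
have arcsE : arcs = up :|: swap @: up.
  apply/setP=> -[u v]; rewrite !inE /=; apply/idP/idP.
    move=> euv; case: ltngtP (neq_of_e _ _ euv) => [uv|vu|] //= _.
      by rewrite euv.
    by apply/orP; right; apply/imsetP; exists (v, u); rewrite // inE /= esym euv vu.
  case/orP=> [/andP[] //|/imsetP[[a b]]]; rewrite inE /= => /andP[eab _] [-> ->].
  by rewrite esym.
have up_swap : [disjoint up & swap @: up].
  rewrite -setI_eq0; apply/eqP/setP=> -[u v]; rewrite !inE /=.
  apply/negbTE/andP=> -[/andP[_ uv] /imsetP[[a b]]]; rewrite inE /= => /andP[_ ab] [ea eb].
  by move: uv ab; rewrite ea eb => /ltnW; rewrite leqNgt => /negbTE ->.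
have card_swap : #|swap @: up| = #|up|.
  by apply: card_imset => -[a b] [c d] [-> ->].
have card_up : #|up| = #|edges e|.
  have -> : edges e = [set [set q.1; q.2] | q in up].
    apply/setP=> f; rewrite inE; apply/idP/imsetP.
      case/existsP=> x /existsP[y /andP[exy /eqP ->]].
      case: ltngtP (neq_of_e _ _ exy) => [xy|yx|] //= _.
        by exists (x, y); rewrite // inE /= exy xy.
      by exists (y, x); rewrite 1?setUC // inE /= esym exy yx.
    case=> -[a b]; rewrite inE /= => /andP[eab _] ->.
    by apply/existsP; exists a; apply/existsP; exists b; rewrite eab eqxx.
  symmetry; apply: card_in_imset => -[a b] [c d]; rewrite !inE /=.
  move=> /andP[_ ab] /andP[_ cd] /set2_eq[[-> ->] //|[ea eb]].
  by move: ab cd; rewrite ea eb => /ltnW; rewrite leqNgt => /negbTE ->.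
by rewrite arcsE cardsU (disjoint_setI0 up_swap) cards0 subn0 card_swap card_up addnn mul2n.
Qed.

Definition cut_arcs (X : {set T}) : {set T * T} :=
  [set p | [&& p.1 \in X, p.2 \notin X & e p.1 p.2]].

Lemma card_cut_arcs X : #|cut_arcs X| = #|edge_cut e X|.
Proof.
have -> : edge_cut e X = [set [set p.1; p.2] | p in cut_arcs X].
  apply/setP=> f; rewrite inE; apply/idP/imsetP.
    case/existsP=> x /existsP[y /and4P[xX yX exy /eqP ->]].
    by exists (x, y); rewrite // inE /= xX yX exy.
  case=> -[x y]; rewrite inE /= => /and3P[xX yX exy] ->.
  by apply/existsP; exists x; apply/existsP; exists y; rewrite xX yX exy eqxx.
apply/esym/card_in_imset=> -[a b] [c d]; rewrite !inE /=.
move=> /and3P[aX bX _] /and3P[cX dX _] /set2_eq[[-> ->] //|[ac _]].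
by move: aX dX; rewrite ac => ->.
Qed.

Lemma edge_cut_sub_edges X : edge_cut e X \subset edges e.
Proof.
apply/subsetP=> f; rewrite !inE => /existsP[x /existsP[y /and4P[_ _ exy ef]]].
by apply/existsP; exists x; apply/existsP; exists y; rewrite exy.
Qed.

Lemma kappa'_le X : proper_part X -> kappa' e <= #|edge_cut e X|.
Proof. by move=> pX; rewrite /kappa' -minEnat -leEnat; apply: bigmin_le_cond. Qed.

Lemma kappa'_attained : 1 < #|T| ->
  exists2 X, proper_part X & #|edge_cut e X| = kappa' e.
Proof.
case/card_gt1P=> x0 [y0 [_ _ x0y0]].
have p0 : proper_part [set x0].
  rewrite /proper_part -card_gt0 cards1 /=; apply/eqP=> x0T.
  by move: (in_setT y0); rewrite -x0T inE eq_sym (negbTE x0y0).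
rewrite /kappa' -minEnat (bigmin_eq_arg _ _ _ _ p0); last first.
  by move=> X _; rewrite leEnat subset_leq_card ?edge_cut_sub_edges.
by case: arg_minP => // X pX _; exists X.
Qed.

End EdgeCuts.

Section InducedSets.

Variables (T U : finType) (eG : rel T) (eH : rel U).

Definition product_edge (p : (T * T) * (U * U)) : {set T * U} :=
  [set (p.1.1, p.2.1); (p.1.2, p.2.2)].

Lemma induced_edge_cutE X : symmetric eH ->
  induced_set eH (edge_cut eG X) = product_edge @: setX (cut_arcs eG X) (arcs eH).
Proof.
move=> Hsym; apply/setP=> f; rewrite inE; apply/idP/imsetP.
  case/existsP=> x /existsP[y /existsP[u /existsP[v /and3P[cut_xy euv hf]]]].
  move: cut_xy; rewrite inE => /existsP[x' /existsP[y' /and4P[xX yX exy /eqP E]]].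
  have arc_xy : (x', y') \in cut_arcs eG X by rewrite inE /= xX yX exy.
  have [arc_uv arc_vu] : (u, v) \in arcs eH /\ (v, u) \in arcs eH.
    by rewrite !inE /= euv Hsym euv.
  by case/orP: hf => /eqP ->; case/set2_eq: E => -[-> ->];
    [exists (x', y', (u, v)) | exists (x', y', (v, u)) | exists (x', y', (v, u))
    | exists (x', y', (u, v))]; rewrite ?in_setX ?arc_xy /product_edge //= setUC.
case=> -[[x y] [u v]]; rewrite !inE /= => /andP[/and3P[xX yX exy] euv] ->.
apply/existsP; exists x; apply/existsP; exists y; apply/existsP; exists u.
apply/existsP; exists v; rewrite euv eqxx andbT /=.
by rewrite inE; apply/existsP; exists x; apply/existsP; exists y; rewrite xX yX exy eqxx.
Qed.

Lemma card_induced_edge_cut X : simple_graph eH ->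
  #|induced_set eH (edge_cut eG X)| = 2 * #|edge_cut eG X| * #|edges eH|.
Proof.
move=> HH; rewrite induced_edge_cutE; last by case: HH.
rewrite card_in_imset ?cardsX ?card_cut_arcs ?card_arcs // 1?mulnCA ?mulnA //.
move=> [[a b] [u v]] [[c d] [u' v']]; rewrite !inE /=.
move=> /andP[/and3P[aX bX _] _] /andP[/and3P[cX dX _] _].
case/set2_eq=> [[[-> ->] [-> ->]] //|[[ac _] _]].
by move: aX dX; rewrite ac => ->.
Qed.

End InducedSets.

Lemma star_disconnected_cut (T U : finType) (eG : rel T) (eH : rel U)
    (S : {set {set T * U}}) : symmetric eH ->
  ~ graph_connected (star_rel eG eH S) ->
  exists2 X, proper_part X & induced_set eH (edge_cut eG X) \subset S.
Proof.
move=> Hsym nconn.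
have [x0 [y0 x0y0]] : exists x0 y0, ~~ connect (star_rel eG eH S) x0 y0.
  case: (pickP (fun p => ~~ connect (star_rel eG eH S) p.1 p.2)) => [[x y] nxy|allc].
    by exists x, y.
  by case: nconn => x y; apply/negbFE/(allc (x, y)).
pose X := [set z | connect (star_rel eG eH S) x0 z].
exists X.
  rewrite /proper_part; apply/andP; split; apply/eqP=> XE.
    by move: (in_set0 x0); rewrite -XE inE connect0.
  by move: (in_setT y0); rewrite -XE inE (negbTE x0y0).
rewrite induced_edge_cutE //; apply/subsetP=> f /imsetP[[[x y] [u v]]].
rewrite !inE /= => /andP[/and3P[xX yX exy] euv] ->.
have xy : x != y by apply: contraNneq yX => <-.
apply: contraR yX => notS; apply: (connect_trans xX); apply: connect1.
rewrite /star_rel xy; apply/existsP; exists u; apply/existsP; exists v.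
by rewrite /dprod_rel /= exy euv notS.
Qed.

Theorem lemma1 (T U : finType) (eG : rel T) (eH : rel U)
  (HG : simple_graph eG) (HH : simple_graph eH) (hT : 2 <= #|T|)
  (S : {set {set (T * U)}}) (hS : S \subset edges (dprod_rel eG eH)) :
  ~ graph_connected (star_rel eG eH S) ->
  (#|S| > 2 * kappa' eG * #|edges eH|) \/
  (#|S| = 2 * kappa' eG * #|edges eH| /\
   exists C : {set {set T}}, min_edge_cut eG C /\ S = induced_set eH C).
Proof.
move=> /(star_disconnected_cut (proj1 HH))[X pX cutS].
have card_cut := card_induced_edge_cut eG _ HH.
have kX := kappa'_le eG pX.
have lowS : 2 * kappa' eG * #|edges eH| <= #|S|.
  by rewrite (leq_trans _ (subset_leq_card cutS)) // card_cut leq_mul2r leq_mul2l kX !orbT.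
rewrite ltn_neqAle lowS andbT; case: eqVneq => [eqS|]; [right; split=> //|by left].
have [eH0|eH_gt0] := posnP #|edges eH|.
  (* X need not be a minimum cut here, but every induced set is empty. *)
  have [Y pY kY] := kappa'_attained eG hT.
  exists (edge_cut eG Y); split; first by exists Y.
  have -> : S = set0 by apply: cards0_eq; rewrite -eqS eH0 muln0.
  by apply/esym/cards0_eq; rewrite card_cut eH0 muln0.
have min_cut : #|edge_cut eG X| = kappa' eG.
  apply/eqP; rewrite eqn_leq kX andbT -(leq_pmul2r eH_gt0) -(leq_pmul2l (isT : 0 < 2)).
  by rewrite !mulnA -card_cut eqS subset_leq_card.
exists (edge_cut eG X); split; first by exists X.
by apply/eqP; rewrite eq_sym eqEcard cutS card_cut min_cut eqS leqnn.
Qed.
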